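(* Let $\mathcal{S}=(\sigma_{ij})\in\mathrm{SL}(2,\mathbb{Z})$ with $\mathrm{tr}(\mathcal{S})>2$, let $\lambda>1$ be its eigenvalue greater than $1$, and let $P$ be a real matrix with $\det P=1$ and $P\mathcal{S}P^{-1}=\mathrm{diag}(1/\lambda,\lambda)$. Let $A=\begin{pmatrix}1&0\\0&-1\end{pmatrix}$ and let $\mathbb{Z}_\Phi=\langle \mathbf{t}_3\rangle\times\langle\bar\alpha\rangle\cong\mathbb{Z}\times\mathbb{Z}_2$. Then there is no homomorphism $\varphi:\mathbb{Z}_\Phi\to\mathrm{GL}(2,\mathbb{Z})$ with $\varphi(\mathbf{t}_3)=\mathcal{S}$ and $\varphi(\bar\alpha)=P^{-1}AP$.
   Context: Here $\mathbb{Z}_\Phi$ is the extension of $\mathbb{Z}=\langle\mathbf{t}_3\rangle$ by $\Phi=\langle A\rangle\cong\mathbb{Z}_2$ with $\bar\alpha=(\mathbf{t}_3^0,A)$ commuting with $\mathbf{t}_3$ (since $A$ is diagonal it acts trivially on the $\mathbb{R}$-factor of $\mathrm{Sol}^3$). *)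

From HB Require Import structures.
From mathcomp Require Import all_boot all_order all_algebra.
Set Implicit Arguments. Unset Strict Implicit. Unset Printing Implicit Defensive.
Import Order.TTheory GRing.Theory Num.Theory.
Local Open Scope ring_scope.

Definition ZPhi := (int * 'Z_2)%type.
Definition t3 : ZPhi := (1%:Z, 0).
Definition alphabar : ZPhi := (0%:Z, 1).

Definition is_hom_GL2Z (phi : ZPhi -> 'M[int]_2) : Prop :=
  (forall x, phi x \in unitmx) /\ (forall x y, phi (x + y) = phi x *m phi y).

Definition Amx (R : ringType) : 'M[R]_2 := \matrix_(i, j) (if i == j then (if i == 0 then 1 else -1) else 0).
Definition intmx (R : ringType) (M : 'M[int]_2) : 'M[R]_2 := map_mx (fun z : int => z%:~R) M.

From HB Require Import structures.
From mathcomp Require Import all_boot all_order all_algebra.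
From mathcomp Require Import zify ring.

Set Implicit Arguments.
Unset Strict Implicit.
Unset Printing Implicit Defensive.
Import Order.TTheory GRing.Theory Num.Theory.

(* An integer matrix [B] commuting with [S] with [tr B = 0], [det B = -1]
   satisfies [disc S * p^2 = (a - d)^2] and [disc S * q^2 = (2 b)^2], where
   [S = [[a, b], [c, d]]], [B = [[p, q], [r, -p]]] and [disc S = (tr S)^2 - 4].
   As [p] and [q] cannot both vanish ([p^2 + q r = 1]), [disc S] would be the
   square of a rational number; but for [t > 2], [t^2 - 4] lies strictly
   between [(t-1)^2] and [t^2].  The image of [alphabar] is such a [B], being
   conjugate to [diag(1, -1)] and commuting with the image of [t3]. *)

Lemma mul_sqrn_eq_sqrn (n k m : nat) :
  (0 < k)%N -> (n * k ^ 2 = m ^ 2)%N -> n = (m %/ k) ^ 2.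
Proof.
move=> k_gt0 eq_sq.
have dvd_km : (k %| m)%N by rewrite -(@dvdn_pexp2r k m 2) // -eq_sq dvdn_mull.
move: eq_sq; rewrite -{1}(divnK dvd_km) expnMn => /eqP.
by rewrite eqn_pmul2r ?expn_gt0 ?k_gt0 // => /eqP.
Qed.

Local Open Scope ring_scope.

Lemma sqr_sub4_neq_sqr (t u : int) : 2 < t -> t ^+ 2 - 4 != u ^+ 2.
Proof.
move=> t_gt2; rewrite -(real_normK (num_real u)); apply/eqP.
set v := `|u|; have v_ge0 : 0 <= v := normr_ge0 u; move=> eq_sq.
have [v_le | v_gt] := leP v (t - 1).
  have : 0 <= (t - 1 - v) * (t - 1 + v) by apply: mulr_ge0; lia.
  have -> : (t - 1 - v) * (t - 1 + v) = (t ^+ 2 - 4) - v ^+ 2 + 5 - 2 * t by ring.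
  rewrite eq_sq subrr add0r; lia.
have : 0 <= (v - t) * (v + t) by apply: mulr_ge0; lia.
have -> : (v - t) * (v + t) = v ^+ 2 - (t ^+ 2 - 4) - 4 by ring.
rewrite eq_sq subrr add0r; lia.
Qed.

Lemma sqr_sub4_mul_sqr_neq_sqr (t k m : int) :
  2 < t -> k != 0 -> (t ^+ 2 - 4) * k ^+ 2 != m ^+ 2.
Proof.
move=> t_gt2 k_neq0; apply/eqP => eq_sq.
have disc_ge0 : 0 <= t ^+ 2 - 4 by nia.
have := @mul_sqrn_eq_sqrn `|t ^+ 2 - 4|%N `|k|%N `|m|%N.
rewrite absz_gt0 k_neq0 -!abszX -abszM eq_sq => /(_ isT erefl) eq_n.
apply/negP: (sqr_sub4_neq_sqr (`|m| %/ `|k|)%N t_gt2).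
by rewrite -[t ^+ 2 - 4]gez0_abs // eq_n expr2 expnS expn1 PoszM eqxx.
Qed.

Lemma det_mx2 (R : comNzRingType) (M : 'M[R]_2) :
  \det M = M 0 0 * M 1 1 - M 0 1 * M 1 0.
Proof.
rewrite (expand_det_row _ 0) !big_ord_recr big_ord0 /= /cofactor !det_mx11 !mxE /=.
rewrite expr0 expr1 add0r mul1r mulN1r mulrN.
by congr (M _ _ * M _ _ - M _ _ * M _ _); apply/val_inj.
Qed.

Lemma mxtrace_mx2 (R : comNzRingType) (M : 'M[R]_2) : \tr M = M 0 0 + M 1 1.
Proof.
rewrite /mxtrace !big_ord_recr big_ord0 /= add0r.
by congr (M _ _ + M _ _); apply/val_inj.
Qed.

Lemma mulmx2E (R : comNzRingType) (A B : 'M[R]_2) i j :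
  (A *m B) i j = A i 0 * B 0 j + A i 1 * B 1 j.
Proof.
rewrite mxE !big_ord_recr big_ord0 /= add0r.
by congr (A _ _ * B _ _ + A _ _ * B _ _); apply/val_inj.
Qed.

Section CommuteTraceless.

Variables (R : comNzRingType) (S B : 'M[R]_2).
Hypotheses (SB_comm : S *m B = B *m S) (trB0 : \tr B = 0).

Lemma commute_trace0_entries :
  [/\ B 1 1 = - B 0 0,
      B 0 1 * (S 0 0 - S 1 1) = 2 * S 0 1 * B 0 0,
      B 1 0 * (S 0 0 - S 1 1) = 2 * S 1 0 * B 0 0
    & B 0 1 * S 1 0 = S 0 1 * B 1 0].
Proof.
have eB11 : B 1 1 = - B 0 0 by apply/eqP; rewrite -addr_eq0 addrC -mxtrace_mx2 trB0.
have entry i j := congr1 (fun M : 'M[R]_2 => M i j) SB_comm.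
move: (entry 0 0) (entry 0 1) (entry 1 0); rewrite /= !mulmx2E eB11 => e00 e01 e10.
have by_diff (x y u v : R) : u = v -> x - y = u - v -> x = y.
  by move=> -> /eqP; rewrite subrr subr_eq0 => /eqP.
by split=> //; [apply: (by_diff _ _ _ _ e01) | apply: (by_diff _ _ _ _ (esym e10))
               | apply: (by_diff _ _ _ _ (esym e00))]; ring.
Qed.

Let disc := \tr S ^+ 2 - 4 * \det S.

Lemma commute_trace0_diag :
  disc * B 0 0 ^+ 2 = - \det B * (S 0 0 - S 1 1) ^+ 2.
Proof.
have [eB11 eq01 eq10 _] := commute_trace0_entries.
rewrite /disc !det_mx2 mxtrace_mx2 eB11; apply/eqP; rewrite -subr_eq0; apply/eqP.
transitivity (2 * S 0 1 * B 0 0 * (2 * S 1 0 * B 0 0 - B 1 0 * (S 0 0 - S 1 1))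
   + B 1 0 * (S 0 0 - S 1 1) * (2 * S 0 1 * B 0 0 - B 0 1 * (S 0 0 - S 1 1))); first by ring.
by rewrite -eq01 -eq10 !subrr !mulr0 addr0.
Qed.

Lemma commute_trace0_offdiag :
  disc * B 0 1 ^+ 2 = - \det B * (2 * S 0 1) ^+ 2.
Proof.
have [eB11 eq01 _ eq00] := commute_trace0_entries.
rewrite /disc !det_mx2 mxtrace_mx2 eB11; apply/eqP; rewrite -subr_eq0; apply/eqP.
transitivity ((B 0 1 * (S 0 0 - S 1 1) - 2 * S 0 1 * B 0 0)
                * (B 0 1 * (S 0 0 - S 1 1) + 2 * S 0 1 * B 0 0)
              + 4 * S 0 1 * B 0 1 * (B 0 1 * S 1 0 - S 0 1 * B 1 0)); first by ring.
by rewrite eq01 eq00 !subrr !mul0r !mulr0 addr0.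
Qed.

End CommuteTraceless.

Lemma det_intmx (R : comNzRingType) (M : 'M[int]_2) :
  \det (intmx R M) = (\det M)%:~R.
Proof. exact: det_map_mx. Qed.

Lemma mxtrace_intmx (R : comNzRingType) (M : 'M[int]_2) :
  \tr (intmx R M) = (\tr M)%:~R.
Proof. exact: trace_map_mx. Qed.

Lemma det_similar (R : comUnitRingType) n (P A : 'M[R]_n) :
  P \in unitmx -> \det (invmx P *m A *m P) = \det A.
Proof.
by move=> P_unit; rewrite !det_mulmx det_inv mulrC mulrA divrr ?mul1r -?unitmxE.
Qed.

Lemma mxtrace_similar (R : comUnitRingType) n (P A : 'M[R]_n) :
  P \in unitmx -> \tr (invmx P *m A *m P) = \tr A.
Proof. by move=> P_unit; rewrite mxtrace_mulC mulmxA mulmxV ?mul1mx. Qed.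

Lemma det_Amx (R : comNzRingType) : \det (Amx R) = -1.
Proof. by rewrite det_mx2 !mxE /= mul1r mulr0 subr0. Qed.

Lemma mxtrace_Amx (R : comNzRingType) : \tr (Amx R) = 0.
Proof. by rewrite mxtrace_mx2 !mxE /= subrr. Qed.

Lemma intmx_similar_Amx (R : numFieldType) (B : 'M[int]_2) (P : 'M[R]_2) :
  P \in unitmx -> intmx R B = invmx P *m Amx R *m P ->
  \det B = -1 /\ \tr B = 0.
Proof.
move=> P_unit B_similar; split; apply: (@intr_inj R).
- by rewrite -det_intmx B_similar det_similar // det_Amx rmorphN1.
- by rewrite -mxtrace_intmx B_similar mxtrace_similar // mxtrace_Amx rmorph0.
Qed.

Lemma det_commute_hyperbolic_trace0 (S B : 'M[int]_2) :
  \det S = 1 -> 2 < \tr S -> S *m B = B *m S -> \tr B = 0 -> \det B != -1.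
Proof.
move=> detS1 trS_gt2 SB_comm trB0; apply/eqP => detBN1.
have not_sq k m : k != 0 -> (\tr S ^+ 2 - 4) * k ^+ 2 <> m ^+ 2.
  by move=> k_neq0; apply/eqP; apply: sqr_sub4_mul_sqr_neq_sqr.
have := commute_trace0_diag SB_comm trB0.
have := commute_trace0_offdiag SB_comm trB0.
rewrite detS1 detBN1 opprK mulr1 !mul1r.
have [p0 | p_neq0] := eqVneq (B 0 0) 0; last by move=> _; apply: not_sq.
have [eB11 _ _ _] := commute_trace0_entries SB_comm trB0.
have q_neq0 : B 0 1 != 0.
  by apply: contra_eq_neq detBN1 => q0; rewrite det_mx2 eB11 p0 q0 !mul0r subr0.
by move=> + _; apply: not_sq.
Qed.

(* Only the conjugacy of [phi alphabar] to [diag(1, -1)] over [R] is used. *)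
Theorem lemma3p4 (R : realFieldType) (S : 'M[int]_2) (lam : R) (P : 'M[R]_2) :
  \det S = 1 -> \tr S > 2 ->
  eigenvalue (intmx R S) lam -> 1 < lam ->
  \det P = 1 ->
  P *m intmx R S *m invmx P = diag_mx (\row_(i < 2) (if i == 0 then lam^-1 else lam)) ->
  ~ exists phi : ZPhi -> 'M[int]_2,
      [/\ is_hom_GL2Z phi, phi t3 = S & intmx R (phi alphabar) = invmx P *m Amx R *m P].
Proof.
move=> detS1 trS_gt2 _ _ detP1 _ [phi [[_ phiM] phi_t3 phi_alpha]].
have P_unit : P \in unitmx by rewrite unitmxE detP1 unitr1.
have [detBN1 trB0] := intmx_similar_Amx P_unit phi_alpha.
have SB_comm : S *m phi alphabar = phi alphabar *m S by rewrite -phi_t3 -!phiM addrC.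
by move: detBN1; apply/eqP; apply: det_commute_hyperbolic_trace0 SB_comm trB0.
Qed.
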